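(* Let $z \in \mathbb{R}$ with $|z| > 1$, and for $k \ge 0$ define \[ \mathrm{BF}_{01}(z; k) = \sqrt{1+k}\,\exp\left\{-\frac{z^2 k}{2(1+k)}\right\}. \] Then there exists a unique $k^* > 0$ such that $\mathrm{BF}_{01}(z; k^* ) = 1$. Moreover, $k^*$ satisfies \[ (1+k^* )\ln(1+k^* ) = z^2 k^*. \] Furthermore, for $0 < k < k^*$ one has $\mathrm{BF}_{01}(z; k) < 1$, and for $k > k^*$ one has $\mathrm{BF}_{01}(z; k) > 1$.
   Context: Setting: $X_1,\dots,X_n$ i.i.d. $\mathcal{N}(\mu,1)$, testing $H_0:\mu=0$ versus $H_1:\mu\neq 0$, with prior $\mu\mid H_1\sim\mathcal{N}(0,\tau^2)$, $\tau^2>0$. With $z=\sqrt{n}\,\bar x$ and $k = n\tau^2$, the Bayes factor in favour of $H_0$ is $\mathrm{BF}_{01}(z;k)$ as defined in the claim. The value $k^*$ is called the flip point; $\mathrm{BF}_{01}<1$ is interpreted as evidence for $H_1$ and $\mathrm{BF}_{01}>1$ as evidence for $H_0$. *)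

From Stdlib Require Import Reals.
Open Scope R_scope.

Definition BF01 (z k : R) : R :=
  sqrt (1 + k) * exp (- (z ^ 2 * k) / (2 * (1 + k))).

(** With [a = z^2] and [t = 1 + k], [2 ln BF01 z k = ln t - a + a / t], a function of [t > 0]
    with derivative [(t - a) / t^2]: it vanishes at [t = 1], decreases on [(0, a]] and increases
    on [[a, oo)].  Since [ln a < a - 1] it is negative at [t = a], and it is positive at [t = e^a],
    so it has exactly one zero [t0 > 1], lying in [(a, e^a)]; it is negative on [(1, t0)] and
    positive beyond [t0].  The zero condition [ln t0 = a - a / t0] is the fixed-point equation. *)

From Stdlib Require Import Reals Lra.
Open Scope R_scope.

Lemma ln_lt_sub_1 x : 0 < x -> x <> 1 -> ln x < x - 1.
Proof.
  intros x_gt0 x_neq1.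
  assert (ln_neq0 : ln x <> 0) by (apply ln_neq_0; assumption).
  pose proof (exp_ineq1 _ ln_neq0) as bound.
  rewrite exp_ln in bound by exact x_gt0; lra.
Qed.

Lemma ln_sub_bounds s t : 0 < s -> 0 < t -> s <> t ->
  1 - s / t < ln t - ln s < t / s - 1.
Proof.
  intros s_gt0 t_gt0 s_neq_t.
  assert (quot_neq1 : forall u v, 0 < u -> 0 < v -> u <> v -> v / u <> 1).
  { intros u v u_gt0 _ u_neq_v E; apply u_neq_v.
    replace v with (v / u * u) by (field; lra); rewrite E; ring. }
  pose proof (ln_lt_sub_1 (s / t) ltac:(apply Rdiv_lt_0_compat; lra)
                  (quot_neq1 t s t_gt0 s_gt0 (not_eq_sym s_neq_t))) as lower.
  pose proof (ln_lt_sub_1 (t / s) ltac:(apply Rdiv_lt_0_compat; lra)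
                  (quot_neq1 s t s_gt0 t_gt0 s_neq_t)) as upper.
  unfold Rdiv in *.
  rewrite ln_mult, ln_Rinv in lower, upper by (try apply Rinv_0_lt_compat; lra).
  lra.
Qed.

Section TwiceLnBF.

Variable a : R.

Definition twice_ln_BF (t : R) : R := ln t - a + a / t.

Lemma twice_ln_BF_1 : twice_ln_BF 1 = 0.
Proof. unfold twice_ln_BF; rewrite ln_1; field. Qed.

Lemma twice_ln_BF_increasing s t : 0 < s -> a <= s -> s < t ->
  twice_ln_BF s < twice_ln_BF t.
Proof.
  intros s_gt0 a_le_s s_lt_t; unfold twice_ln_BF.
  destruct (ln_sub_bounds s t s_gt0 ltac:(lra) ltac:(lra)) as [ln_lower _].
  assert (gap : 1 - s / t + (a / t - a / s) = (t - s) * (s - a) / (t * s)) by (field; lra).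
  assert (gap_ge0 : 0 <= (t - s) * (s - a) / (t * s)).
  { unfold Rdiv; apply Rmult_le_pos; [nra | left; apply Rinv_0_lt_compat; nra]. }
  lra.
Qed.

Lemma twice_ln_BF_decreasing s t : 0 < s -> s < t -> t <= a ->
  twice_ln_BF t < twice_ln_BF s.
Proof.
  intros s_gt0 s_lt_t t_le_a; unfold twice_ln_BF.
  destruct (ln_sub_bounds s t s_gt0 ltac:(lra) ltac:(lra)) as [_ ln_upper].
  assert (gap : t / s - 1 + (a / t - a / s) = - ((t - s) * (a - t) / (t * s))) by (field; lra).
  assert (gap_le0 : 0 <= (t - s) * (a - t) / (t * s)).
  { unfold Rdiv; apply Rmult_le_pos; [nra | left; apply Rinv_0_lt_compat; nra]. }
  lra.
Qed.

Lemma twice_ln_BF_continuous t : 0 < t -> continuity_pt twice_ln_BF t.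
Proof.
  intros t_gt0; unfold twice_ln_BF, Rdiv.
  apply continuity_pt_plus; [apply continuity_pt_minus|].
  - apply derivable_continuous_pt; exists (/ t); exact (derivable_pt_lim_ln t t_gt0).
  - apply continuity_pt_const; intros u v; reflexivity.
  - apply continuity_pt_mult; [apply continuity_pt_const; intros u v; reflexivity|].
    apply continuity_pt_inv; [apply derivable_continuous_pt, derivable_pt_id | lra].
Qed.

Lemma twice_ln_BF_zero_eq t : 0 < t -> twice_ln_BF t = 0 -> t * ln t = a * (t - 1).
Proof.
  intros t_gt0; unfold twice_ln_BF; intros zero.
  replace (ln t) with (a - a / t) by lra; field; lra.
Qed.

Hypothesis a_gt1 : 1 < a.

Lemma twice_ln_BF_at_a : twice_ln_BF a < 0.
Proof.
  unfold twice_ln_BF.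
  pose proof (ln_lt_sub_1 a ltac:(lra) ltac:(lra)).
  replace (a / a) with 1 by (field; lra); lra.
Qed.

Lemma twice_ln_BF_at_exp_a : 0 < twice_ln_BF (exp a).
Proof.
  unfold twice_ln_BF; rewrite ln_exp.
  pose proof (Rdiv_lt_0_compat a (exp a) ltac:(lra) (exp_pos a)); lra.
Qed.

Lemma twice_ln_BF_root : exists t, a < t /\ twice_ln_BF t = 0.
Proof.
  assert (a_lt_exp_a : a < exp a) by (pose proof (exp_ineq1 a ltac:(lra)); lra).
  destruct (Ranalysis5.IVT_interv twice_ln_BF a (exp a)) as [t [[a_le_t _] zero]].
  - intros u [a_le_u _]; apply twice_ln_BF_continuous; lra.
  - exact a_lt_exp_a.
  - exact twice_ln_BF_at_a.
  - exact twice_ln_BF_at_exp_a.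
  - exists t; split; [|exact zero].
    destruct a_le_t as [lt | eq]; [exact lt|].
    pose proof twice_ln_BF_at_a; rewrite eq in *; lra.
Qed.

Lemma twice_ln_BF_neg_below_root t s : a < t -> twice_ln_BF t = 0 ->
  1 < s -> s < t -> twice_ln_BF s < 0.
Proof.
  intros a_lt_t zero s_gt1 s_lt_t.
  destruct (Rle_lt_dec s a) as [s_le_a | a_lt_s].
  - rewrite <- twice_ln_BF_1; apply twice_ln_BF_decreasing; lra.
  - rewrite <- zero; apply twice_ln_BF_increasing; lra.
Qed.

Lemma twice_ln_BF_pos_above_root t s : a < t -> twice_ln_BF t = 0 ->
  t < s -> 0 < twice_ln_BF s.
Proof.
  intros a_lt_t zero t_lt_s.
  rewrite <- zero; apply twice_ln_BF_increasing; lra.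
Qed.

End TwiceLnBF.

Lemma BF01_eq_exp z k : -1 < k -> BF01 z k = exp (twice_ln_BF (z ^ 2) (1 + k) / 2).
Proof.
  intros k_gt; unfold BF01, twice_ln_BF.
  rewrite <- Rpower_sqrt by lra; unfold Rpower.
  rewrite <- exp_plus; f_equal; field; lra.
Qed.

Lemma BF01_eq_1 z k : -1 < k -> twice_ln_BF (z ^ 2) (1 + k) = 0 -> BF01 z k = 1.
Proof.
  intros k_gt zero; rewrite BF01_eq_exp, zero by exact k_gt.
  replace (0 / 2) with 0 by field; exact exp_0.
Qed.

Lemma BF01_lt_1 z k : -1 < k -> twice_ln_BF (z ^ 2) (1 + k) < 0 -> BF01 z k < 1.
Proof.
  intros k_gt neg; rewrite BF01_eq_exp by exact k_gt.
  pose proof (exp_increasing (twice_ln_BF (z ^ 2) (1 + k) / 2) 0 ltac:(lra)) as mono.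
  rewrite exp_0 in mono; exact mono.
Qed.

Lemma BF01_gt_1 z k : -1 < k -> 0 < twice_ln_BF (z ^ 2) (1 + k) -> 1 < BF01 z k.
Proof.
  intros k_gt pos; rewrite BF01_eq_exp by exact k_gt.
  pose proof (exp_increasing 0 (twice_ln_BF (z ^ 2) (1 + k) / 2) ltac:(lra)) as mono.
  rewrite exp_0 in mono; exact mono.
Qed.

Theorem theorem1 (z : R) (hz : 1 < Rabs z) :
  exists kstar : R,
    (0 < kstar /\ BF01 z kstar = 1 /\
     (forall k : R, 0 < k -> BF01 z k = 1 -> k = kstar)) /\
    (1 + kstar) * ln (1 + kstar) = z ^ 2 * kstar /\
    (forall k : R, 0 < k -> k < kstar -> BF01 z k < 1) /\
    (forall k : R, kstar < k -> BF01 z k > 1).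
Proof.
  assert (a_gt1 : 1 < z ^ 2) by (rewrite <- (pow2_abs z); nra).
  destruct (twice_ln_BF_root _ a_gt1) as [t [a_lt_t zero]].
  assert (below : forall k, 0 < k -> k < t - 1 -> BF01 z k < 1).
  { intros k k_gt0 k_lt; apply BF01_lt_1; [lra|].
    apply (twice_ln_BF_neg_below_root _ t); lra. }
  assert (above : forall k, t - 1 < k -> BF01 z k > 1).
  { intros k k_gt; apply BF01_gt_1; [lra|].
    apply (twice_ln_BF_pos_above_root _ a_gt1 t); lra. }
  assert (t_eq : 1 + (t - 1) = t) by ring.
  exists (t - 1); split; [split; [|split]|split; [|split]]; try assumption.
  - lra.
  - apply BF01_eq_1; [lra|]; rewrite t_eq; exact zero.
  - intros k k_gt0 bf_eq1.
    destruct (Rtotal_order k (t - 1)) as [lt | [eq | gt]]; [| exact eq |].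
    + pose proof (below k k_gt0 lt); lra.
    + pose proof (above k gt); lra.
  - rewrite t_eq; apply twice_ln_BF_zero_eq; lra.
Qed.
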